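(* Let $n\ge1$, $U=\mathcal{U}(osp(1|2n))$ and $\Omega\subset U$ as defined below. For every $a\in\{1,\dots,2n\}$, $\sigma_a\triangleright\Omega\subset\Omega$. Consequently the action $\triangleright$ makes $\Omega$ an $osp(1|2n)$-submodule of $U$.
   Context: $\mathcal{U}(osp(1|2n))$ is the associative superalgebra over $\mathbb{C}$ generated by odd elements $\sigma_a$ and even elements $\sigma_{ab}=\sigma_{ba}$ ($1\le a,b\le 2n$) subject to $\{\sigma_a,\sigma_b\}=\sigma_{ab}$, $[\sigma_a,\sigma_{bc}]=-g_{ab}\sigma_c-g_{ac}\sigma_b$, $[\sigma_{ab},\sigma_{cd}]=-g_{ac}\sigma_{bd}-g_{ad}\sigma_{bc}-g_{bc}\sigma_{ad}-g_{bd}\sigma_{ac}$, where $(g_{ab})=\begin{pmatrix}0&-I_n\\ I_n&0\end{pmatrix}$. The action $\triangleright$ on homogeneous $x\in U$ is: $\sigma_{ab}\triangleright x=[\sigma_{ab},x]$; $\sigma_a\triangleright x=\sigma_ax+x\sigma_a$ if $x$ is even; $\sigma_a\triangleright x=\sigma_ax-x\sigma_a$ if $x$ is odd. This action satisfies $\{\sigma_a,\sigma_b\}\triangleright x=\sigma_a\triangleright(\sigma_b\triangleright x)+\sigma_b\triangleright(\sigma_a\triangleright x)$ and the analogous identities for the other relations, so it makes $U$ an $osp(1|2n)$-module. For indices $a_1,\dots,a_p$, $[a_1\dots a_p]=\sum_{s\in\mathfrak{S}_p}\varepsilon(s)\sigma_{a_{s(1)}}\cdots\sigma_{a_{s(p)}}$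 ($[\,]=1$ for $p=0$), and $\Omega$ is the span of these for $0\le p\le 2n$. *)

From HB Require Import structures.
From mathcomp Require Import all_boot all_order all_algebra all_fingroup.
From mathcomp Require Import complex Rstruct.
Set Implicit Arguments.
Unset Strict Implicit.
Unset Printing Implicit Defensive.
Import Order.TTheory GRing.Theory Num.Theory.
Local Open Scope ring_scope.

Definition C : fieldType := (Rdefinitions.R)[i].

(* Indices 1..2n are encoded as 'I_(2n) = {0,..,2n-1}. *)
(* g = [[0, -I_n],[I_n, 0]] : g_{a, a+n} = -1 and g_{a+n, a} = 1 (a < n). *)
Definition gmat (n : nat) (a b : 'I_(n.*2)) : C :=
  if (a < n)%N && (b == a + n :> nat)%N then -1
  else if (n <= a)%N && (b + n == a :> nat)%N then 1
  else 0.

(* The defining relations of U(osp(1|2n)) for elements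
   s1 a (odd sigma_a) and s2 a b (even sigma_ab) of an algebra A. *)
Definition osp_relations (n : nat) (A : algType C)
    (s1 : 'I_(n.*2) -> A) (s2 : 'I_(n.*2) -> 'I_(n.*2) -> A) : Prop :=
  [/\ (forall a b, s2 a b = s2 b a),
      (forall a b, s1 a * s1 b + s1 b * s1 a = s2 a b),
      (forall a b c, s1 a * s2 b c - s2 b c * s1 a
                     = - (gmat a b *: s1 c) - gmat a c *: s1 b) &
      (forall a b c d, s2 a b * s2 c d - s2 c d * s2 a b
                       = - (gmat a c *: s2 b d) - gmat a d *: s2 b c
                         - gmat b c *: s2 a d - gmat b d *: s2 a c)].

(* (A, s1, s2) is THE universal enveloping algebra U(osp(1|2n)):
   it satisfies the relations and is initial among C-algebras with
   elements satisfying them (existence and uniqueness of the algebra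
   morphism sending generators to generators). *)
Definition is_U_osp (n : nat) (A : algType C)
    (s1 : 'I_(n.*2) -> A) (s2 : 'I_(n.*2) -> 'I_(n.*2) -> A) : Prop :=
  osp_relations s1 s2 /\
  forall (B : algType C) (t1 : 'I_(n.*2) -> B)
         (t2 : 'I_(n.*2) -> 'I_(n.*2) -> B),
    osp_relations t1 t2 ->
    (exists f : {lrmorphism A -> B},
        (forall a, f (s1 a) = t1 a) /\ (forall a b, f (s2 a b) = t2 a b)) /\
    (forall f g : {lrmorphism A -> B},
        (forall a, f (s1 a) = t1 a) -> (forall a b, f (s2 a b) = t2 a b) ->
        (forall a, g (s1 a) = t1 a) -> (forall a b, g (s2 a b) = t2 a b) ->
        f =1 g).

Definition antisym (n : nat) (A : algType C) (s1 : 'I_(n.*2) -> A)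
    (p : nat) (idx : 'I_p -> 'I_(n.*2)) : A :=
  \sum_(s : 'S_p) (-1) ^+ (odd_perm s) * \prod_(i < p) s1 (idx (s i)).

Definition in_Omega (n : nat) (A : algType C) (s1 : 'I_(n.*2) -> A)
    (x : A) : Prop :=
  exists (m : nat) (c : 'I_m -> C)
         (w : 'I_m -> {p : 'I_(n.*2).+1 & 'I_p -> 'I_(n.*2)}),
    x = \sum_(i < m) c i *: antisym s1 (tagged (w i)).

(* The odd-generator action on a homogeneous element x of parity par
   (par = true : odd): sigma_a |> x = sigma_a x + x sigma_a (x even),
   sigma_a x - x sigma_a (x odd). *)
Definition act_odd (A : algType C) (sa : A) (par : bool) (x : A) : A :=
  if par then sa * x - x * sa else sa * x + x * sa.

Definition act_even (A : algType C) (sab : A) (x : A) : A :=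
  sab * x - x * sab.

From HB Require Import structures.
From mathcomp Require Import all_boot all_order all_algebra all_fingroup.
From mathcomp Require Import complex Rstruct.
Import GRing.Theory.
Local Open Scope ring_scope.

Set Implicit Arguments.
Unset Strict Implicit.
Unset Printing Implicit Defensive.

(* Let act_word w be the iterated action
   sigma_(w_1) |> (sigma_(w_2) |> ... (sigma_(w_k) |> 1)), where each step uses
   the parity of the word acted on.  Then 2^p [a_1 ... a_p] is the signed sum
   of the act_word of the rearrangements of a_1 ... a_p, so [a_1 ... a_p] lies
   in the span of the words of length p.  This span is sent by sigma_a |> into
   words of length p + 1, by definition, and by sigma_ab |> into itself, since
   sigma_ab |> is a derivation of both actions mapping each sigma_c into the
   span of the sigma's.  It remains to show act_word w in Omega, by induction
   on the length.  Modulo words two letters shorter, {sigma_a, sigma_b} =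
   sigma_ab lets two adjacent letters of a word be swapped at the cost of a
   sign, whence sigma_a |> 2^p [a_1 ... a_p] = 2^(p+1) [a a_1 ... a_p] / (p+1)
   up to an error term in Omega by induction; this needs the lengths to be
   tracked modulo 2 (the filtration Omega_upto).  Finally [a_1 ... a_p] = 0 for p > 2n,
   as an index repeats. *)

Definition insert_at (T : Type) (j : nat) (a : T) (w : seq T) :=
  take j w ++ a :: drop j w.

Lemma size_insert_at (T : Type) j (a : T) w :
  size (insert_at j a w) = (size w).+1.
Proof. by rewrite /insert_at size_cat /= addnS -size_cat cat_take_drop. Qed.

Lemma insert_at0 (T : Type) (a : T) w : insert_at 0 a w = a :: w.
Proof. by rewrite /insert_at take0 drop0. Qed.

Lemma insert_atS (T : Type) j (a b : T) w :
  insert_at j.+1 a (b :: w) = b :: insert_at j a w.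
Proof. by []. Qed.

Lemma map_enum_lift (T : Type) p (j : 'I_p.+1) (f : 'I_p.+1 -> T) :
  [seq f i | i <- enum 'I_p.+1] =
  insert_at j (f j) [seq f (lift j i) | i <- enum 'I_p].
Proof.
elim: p j f => [|p IH] j f; first by rewrite ord1 !enum_ordSl !enum_ord0.
rewrite enum_ordSl /=; case: (unliftP ord0 j) => [j'|] ->; last first.
  by rewrite insert_at0 -map_comp.
rewrite -map_comp (IH j') enum_ordSl /= insert_atS -map_comp.
congr (_ :: insert_at _ _ _); first by congr f; apply: val_inj.
by apply: eq_map => i; congr f; apply: val_inj; exact: esym (bumpS _ _).
Qed.

Lemma sum_perm_lift_image (V : nmodType) m (i : 'I_m.+1) (F : 'S_m.+1 -> V) :
  \sum_(s : 'S_m.+1) F s = \sum_(k < m.+1) \sum_(s : 'S_m) F (lift_perm i k s).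
Proof.
rewrite (partition_big (fun s : 'S_m.+1 => s i) predT) //=; apply: eq_bigr => k _.
pose restr (s : 'S_m.+1) (k' : 'I_m) := odflt k' (unlift (s i) (s (lift i k'))).
have restrK (s : 'S_m.+1) k' : lift (s i) (restr s k') = s (lift i k').
  rewrite /restr; case: unliftP => [j -> // | /perm_inj/eqP].
  by rewrite eq_sym (negbTE (neq_lift _ _)).
have restr_inj (s : 'S_m.+1) : injective (restr s).
  by move=> k1 k2 /(congr1 (lift (s i))); rewrite !restrK => /perm_inj/lift_inj.
rewrite (reindex (lift_perm i k)) /=; last first.
  exists (fun s => perm (restr_inj s)) => [t _ | s /eqP si].
    by apply/permP => k'; rewrite permE /restr lift_perm_id lift_perm_lift liftK.
  apply/permP => x; case: (unliftP i x) => [k'|] ->; last by rewrite lift_perm_id.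
  by rewrite lift_perm_lift permE -si restrK.
by apply: eq_bigl => s; rewrite lift_perm_id eqxx.
Qed.

Lemma sum_perm_lift_preimage (V : nmodType) m (k : 'I_m.+1) (F : 'S_m.+1 -> V) :
  \sum_(s : 'S_m.+1) F s = \sum_(j < m.+1) \sum_(s : 'S_m) F (lift_perm j k s).
Proof.
rewrite (reindex_inj invg_inj) (sum_perm_lift_image k) /=.
apply: eq_bigr => j _; rewrite (reindex_inj invg_inj) /=.
by apply: eq_bigr => s _; rewrite lift_permV invgK.
Qed.

Lemma signr_mulZ (R : pzRingType) (A : lalgType R) b (x : A) :
  (-1) ^+ b * x = (-1) ^+ b *: x.
Proof. by rewrite -signr_odd mulr_sign -signr_odd scaler_sign. Qed.

Section Span.
Variables (R : pzRingType) (V : lmodType R).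

Inductive in_span (P : V -> Prop) : V -> Prop :=
  | in_span0 : in_span P 0
  | in_span_gen x : P x -> in_span P x
  | in_spanZD a x y : in_span P x -> in_span P y -> in_span P (a *: x + y).

Variable P : V -> Prop.

Lemma in_spanD x y : in_span P x -> in_span P y -> in_span P (x + y).
Proof. by move=> Px Py; rewrite -[x]scale1r; apply: in_spanZD. Qed.

Lemma in_spanZ a x : in_span P x -> in_span P (a *: x).
Proof. by move=> Px; rewrite -[_ *: _]addr0; apply: in_spanZD; last exact: in_span0. Qed.

Lemma in_spanB x y : in_span P x -> in_span P y -> in_span P (x - y).
Proof. by move=> Px Py; rewrite addrC -scaleN1r; apply: in_spanZD. Qed.

Lemma in_span_sum (I : Type) (r : seq I) (Q : pred I) (F : I -> V) :
  (forall i, Q i -> in_span P (F i)) -> in_span P (\sum_(i <- r | Q i) F i).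
Proof. by move=> PF; apply: big_ind => //; [apply: in_span0 | apply: in_spanD]. Qed.

Lemma in_span_sub (Q : V -> Prop) x :
  (forall y, P y -> in_span Q y) -> in_span P x -> in_span Q x.
Proof.
by move=> PQ; elim=> [|y /PQ|a y z _ Qy _ Qz] //; [apply: in_span0 | apply: in_spanZD].
Qed.

End Span.

Lemma in_span_linear (R : pzRingType) (V W : lmodType R) (f : {linear V -> W})
    (P : V -> Prop) (Q : W -> Prop) x :
  (forall y, P y -> in_span Q (f y)) -> in_span P x -> in_span Q (f x).
Proof.
move=> PQ; elim=> [|y /PQ|a y z _ Qy _ Qz] //; first by rewrite linear0; exact: in_span0.
by rewrite linearP; apply: in_spanZD.
Qed.

Section Actions.
Variable A : algType C.

Lemma act_odd_is_linear (sa : A) par : linear (act_odd sa par).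
Proof.
move=> a u v; rewrite /act_odd; case: par;
  by rewrite mulrDr mulrDl -scalerAr -scalerAl ?opprD ?scalerBr ?scalerDr addrACA.
Qed.

HB.instance Definition _ (sa : A) par :=
  GRing.isLinear.Build C A A *:%R (act_odd sa par) (act_odd_is_linear sa par).

Lemma act_even_is_linear (sab : A) : linear (act_even sab).
Proof.
move=> a u v; rewrite /act_even.
by rewrite mulrDr mulrDl -scalerAr -scalerAl opprD scalerBr addrACA.
Qed.

HB.instance Definition _ (sab : A) :=
  GRing.isLinear.Build C A A *:%R (act_even sab) (act_even_is_linear sab).

Lemma act_oddDl par (u v x : A) :
  act_odd (u + v) par x = act_odd u par x + act_odd v par x.
Proof. by rewrite /act_odd; case: par; rewrite mulrDr mulrDl ?opprD addrACA. Qed.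

Lemma act_oddZl par a (u x : A) : act_odd (a *: u) par x = a *: act_odd u par x.
Proof.
by rewrite /act_odd -scalerAr -scalerAl; case: par; rewrite ?scalerBr ?scalerDr.
Qed.

Lemma act_oddE (sa u : A) m :
  act_odd sa (odd m) u = sa * u + (-1) ^+ m *: (u * sa).
Proof. by rewrite /act_odd -signr_odd; case: (odd m); rewrite ?scaleN1r ?scale1r. Qed.

Lemma act_odd_anticomm (x y z : A) par :
  act_odd x (~~ par) (act_odd y par z) + act_odd y (~~ par) (act_odd x par z)
  = act_even (x * y + y * x) z.
Proof.
rewrite /act_odd /act_even; case: par => /=; apply/eqP; rewrite -subr_eq0.
all: rewrite !(mulrDr, mulrDl, mulrBr, mulrBl, mulrN, mulNr, opprD, opprK).
all: rewrite !(mulrA, addrA).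
(* twelve monomials, which ACl pairs off against their opposites *)
all: by rewrite (ACl (1*9*2*7*3*6*4*12*5*10*8*11)) /= !(subrr, addNr, add0r).
Qed.

Lemma act_even_act_odd (a x y : A) par :
  act_even a (act_odd x par y) =
  act_odd x par (act_even a y) + act_odd (act_even a x) par y.
Proof.
rewrite /act_odd /act_even; case: par => /=; apply/eqP; rewrite -subr_eq0.
all: rewrite !(mulrDr, mulrDl, mulrBr, mulrBl, mulrN, mulNr, opprD, opprK).
all: rewrite !(mulrA, addrA).
all: by rewrite (ACl (1*9*2*7*3*6*4*12*5*10*8*11)) /= !(subrr, addNr, add0r).
Qed.

End Actions.

Lemma natrC_neq0 k : (k.+1%:R : C) != 0.
Proof.
(* C is declared as a bare fieldType: its numeric structure lives on R[i]. *)
by rewrite (Num.Theory.pnatr_eq0 (Rdefinitions.R)[i]).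
Qed.

Section OmegaStable.
Variables (n : nat) (A : algType C).
Variables (s1 : 'I_n.*2 -> A) (s2 : 'I_n.*2 -> 'I_n.*2 -> A).
Local Notation I := 'I_n.*2.

Hypothesis s1_anticomm : forall a b, s1 a * s1 b + s1 b * s1 a = s2 a b.
Hypothesis s1_s2_comm : forall a b c,
  s1 a * s2 b c - s2 b c * s1 a = - (gmat a b *: s1 c) - gmat a c *: s1 b.

Lemma act_even_s1 d e x :
  act_even (s2 d e) (s1 x) = gmat x d *: s1 e + gmat x e *: s1 d.
Proof. by rewrite /act_even -opprB s1_s2_comm opprB opprK addrC. Qed.

Fixpoint act_word (w : seq I) : A :=
  if w is x :: w' then act_odd (s1 x) (odd (size w')) (act_word w') else 1.

Definition span_words k :=
  in_span (fun y => exists2 u : seq I, size u = k & y = act_word u).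

Lemma span_words_act_odd x k y :
  span_words k y -> span_words k.+1 (act_odd (s1 x) (odd k) y).
Proof.
apply: in_span_linear => _ [u <- ->].
by apply: in_span_gen; exists (x :: u).
Qed.

Lemma act_even_act_word d e w :
  span_words (size w) (act_even (s2 d e) (act_word w)).
Proof.
elim: w => [|x w IH] /=.
  by rewrite /act_even mulr1 mul1r subrr; apply: in_span0.
rewrite act_even_act_odd act_even_s1 act_oddDl !act_oddZl.
apply: in_spanD; first exact: span_words_act_odd.
by apply: in_spanD; apply/in_spanZ/in_span_gen; [exists (e :: w) | exists (d :: w)].
Qed.

Lemma span_words_act_even d e k y :
  span_words k y -> span_words k (act_even (s2 d e) y).
Proof. by apply: in_span_linear => _ [u <- ->]; apply: act_even_act_word. Qed.

Lemma act_word_swap j a w : (j < size w)%N ->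
  span_words (size w).-1
    (act_word (insert_at j.+1 a w) + act_word (insert_at j a w)).
Proof.
elim: w j => [|y w IH] [|j] // lt_j_w.
  rewrite insert_atS !insert_at0 /= act_odd_anticomm s1_anticomm.
  exact: act_even_act_word.
rewrite !insert_atS /= !size_insert_at -linearD.
have w_gt0 : (0 < size w)%N := leq_ltn_trans (leq0n j) lt_j_w.
move: (IH j lt_j_w); rewrite -(prednK w_gt0) /= negbK.
exact: span_words_act_odd.
Qed.

Lemma act_word_insert j a w : (j <= size w)%N ->
  span_words (size w).-1
    (act_word (insert_at j a w) - (-1) ^+ j *: act_word (a :: w)).
Proof.
elim: j => [|j IH] le_j_w.
  by rewrite insert_at0 scale1r subrr; apply: in_span0.
have -> : act_word (insert_at j.+1 a w) - (-1) ^+ j.+1 *: act_word (a :: w) =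
    (act_word (insert_at j.+1 a w) + act_word (insert_at j a w))
    - (act_word (insert_at j a w) - (-1) ^+ j *: act_word (a :: w)).
  by rewrite exprS mulN1r scaleNr opprK opprB addrA addrAC addrK.
by apply: in_spanB; [apply: act_word_swap | apply: IH; apply: ltnW].
Qed.

Lemma antisym_expand_head m (c : 'I_m.+1 -> I) :
  antisym s1 c =
  \sum_(k < m.+1) (-1) ^+ k *: (s1 (c k) * antisym s1 (c \o lift k)).
Proof.
rewrite /antisym (sum_perm_lift_image ord0); apply: eq_bigr => k _.
rewrite mulr_sumr scaler_sumr; apply: eq_bigr => s _.
rewrite odd_lift_perm big_ord_recl lift_perm_id /=.
under eq_bigr do rewrite lift_perm_lift.
by rewrite !signr_mulZ -scalerAr scalerA signr_addb signr_odd.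
Qed.

Lemma antisym_expand_last m (c : 'I_m.+1 -> I) :
  antisym s1 c =
  \sum_(k < m.+1) (-1) ^+ (m + k) *: (antisym s1 (c \o lift k) * s1 (c k)).
Proof.
rewrite /antisym (sum_perm_lift_image ord_max); apply: eq_bigr => k _.
rewrite mulr_suml scaler_sumr; apply: eq_bigr => s _.
rewrite odd_lift_perm big_ord_recr lift_perm_id /=.
have -> : \prod_(i < m) s1 (c (lift_perm ord_max k s (widen_ord (leqnSn m) i)))
        = \prod_(i < m) s1 (c (lift k (s i))).
  apply: eq_bigr => i _; rewrite -(lift_perm_lift ord_max); congr (s1 (c (_ _))).
  by apply: val_inj; rewrite [RHS]lift_max.
by rewrite !signr_mulZ -scalerAl scalerA signr_addb -oddD signr_odd.
Qed.

Definition perm_word m (c : 'I_m -> I) (s : 'S_m) : seq I :=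
  [seq c (s i) | i <- enum 'I_m].

Definition antisym_act m (c : 'I_m -> I) : A :=
  \sum_(s : 'S_m) (-1) ^+ s *: act_word (perm_word c s).

Lemma size_perm_word m (c : 'I_m -> I) s : size (perm_word c s) = m.
Proof. by rewrite size_map size_enum_ord. Qed.

Lemma perm_word_lift_head m (c : 'I_m.+1 -> I) k (s : 'S_m) :
  perm_word c (lift_perm ord0 k s) = c k :: perm_word (c \o lift k) s.
Proof.
rewrite /perm_word enum_ordSl /= lift_perm_id -map_comp; congr (_ :: _).
by apply: eq_map => i /=; rewrite lift_perm_lift.
Qed.

Lemma antisym_act_expand_head m (c : 'I_m.+1 -> I) :
  antisym_act c = \sum_(k < m.+1)
    (-1) ^+ k *: act_odd (s1 (c k)) (odd m) (antisym_act (c \o lift k)).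
Proof.
rewrite /antisym_act (sum_perm_lift_image ord0); apply: eq_bigr => k _.
rewrite linear_sum scaler_sumr; apply: eq_bigr => s _.
rewrite perm_word_lift_head /= size_perm_word linearZ /= scalerA odd_lift_perm /=.
by rewrite signr_addb signr_odd.
Qed.

Lemma antisym_actE m (c : 'I_m -> I) : antisym_act c = 2 ^+ m *: antisym s1 c.
Proof.
elim: m c => [|m IH] c.
  rewrite expr0 scale1r; apply: eq_bigr => s _.
  by rewrite big_ord0 /perm_word enum_ord0 /= signr_mulZ.
rewrite antisym_act_expand_head exprSr -scalerA scaler_nat (mulr2n (antisym s1 c)).
rewrite {1}antisym_expand_head antisym_expand_last -big_split scaler_sumr /=.
apply: eq_bigr => k _; rewrite IH linearZ /= act_oddE.
by rewrite scalerA mulrC -scalerA !scalerDr !scalerA -mulrA -exprD addnC.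
Qed.

Definition cons_idx p (a : I) (c : 'I_p -> I) : 'I_p.+1 -> I :=
  fun i => if unlift ord0 i is Some j then c j else a.

Lemma perm_word_cons_idx p a (c : 'I_p -> I) j (s : 'S_p) :
  perm_word (cons_idx a c) (lift_perm j ord0 s) = insert_at j a (perm_word c s).
Proof.
rewrite /perm_word (map_enum_lift j) lift_perm_id /cons_idx unlift_none.
by congr insert_at; apply: eq_map => i; rewrite lift_perm_lift liftK.
Qed.

Lemma act_odd_antisym_act p (c : 'I_p -> I) a :
  act_odd (s1 a) (odd p) (antisym_act c) =
  \sum_(s : 'S_p) (-1) ^+ s *: act_word (a :: perm_word c s).
Proof.
by rewrite linear_sum; apply: eq_bigr => s _; rewrite linearZ /= size_perm_word.
Qed.

Lemma antisym_act_cons_idx p (c : 'I_p -> I) a :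
  antisym_act (cons_idx a c) - p.+1%:R *: act_odd (s1 a) (odd p) (antisym_act c) =
  \sum_(j < p.+1) \sum_(s : 'S_p) ((-1) ^+ j * (-1) ^+ s) *:
    (act_word (insert_at j a (perm_word c s))
     - (-1) ^+ j *: act_word (a :: perm_word c s)).
Proof.
rewrite act_odd_antisym_act /antisym_act (sum_perm_lift_preimage ord0).
set X := \sum_(s : 'S_p) _.
have -> : p.+1%:R *: X = \sum_(j < p.+1) X by rewrite sumr_const card_ord scaler_nat.
rewrite -sumrB; apply: eq_bigr => j _; rewrite -sumrB; apply: eq_bigr => s _.
rewrite perm_word_cons_idx odd_lift_perm /= addbF signr_addb signr_odd.
by rewrite scalerBr scalerA -mulrA [_ * (_ * _)]mulrCA -expr2 sqrr_sign mulr1.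
Qed.

Definition Omega_upto k := in_span (fun y => exists q (c : 'I_q -> I),
  [/\ (q <= k)%N, odd q = odd k & y = antisym s1 c]).

Lemma Omega_upto_mono k k' y :
  (k <= k')%N -> odd k = odd k' -> Omega_upto k y -> Omega_upto k' y.
Proof.
move=> le_k odd_k; apply: in_span_sub => _ [q [c [le_q odd_q ->]]].
apply: in_span_gen; exists q, c.
by split => //; [exact: leq_trans le_k | rewrite odd_q].
Qed.

Lemma antisym_nil (c : 'I_0 -> I) : antisym s1 c = 1.
Proof.
have all_id : (fun s : 'S_0 => true) =1 pred1 1%g.
  by move=> s /=; apply/esym/eqP/permP => -[].
by rewrite /antisym (eq_bigl _ _ all_id) big_pred1_eq odd_perm1 big_ord0 mulr1.
Qed.

Lemma antisymE p (c : 'I_p -> I) :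
  antisym s1 c = (2 ^+ p)^-1 *: antisym_act c.
Proof. by rewrite antisym_actE scalerA mulVf ?scale1r // expf_neq0 ?natrC_neq0. Qed.

Lemma antisym_act_cons_idx_Omega p (c : 'I_p -> I) a :
  (forall u : seq I, (size u).+1 = p -> Omega_upto (size u) (act_word u)) ->
  Omega_upto p.+1 (antisym_act (cons_idx a c)
                   - p.+1%:R *: act_odd (s1 a) (odd p) (antisym_act c)).
Proof.
rewrite antisym_act_cons_idx; case: p c => [|q] c IH.
  rewrite big_ord1 big1 => [|s _]; first exact: in_span0.
  by rewrite insert_at0 expr0 scale1r subrr scaler0.
have short : span_words q (\sum_(j < q.+2) \sum_(s : 'S_q.+1)
    ((-1) ^+ j * (-1) ^+ s) *: (act_word (insert_at j a (perm_word c s))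
                                - (-1) ^+ j *: act_word (a :: perm_word c s))).
  apply: in_span_sum => j _; apply: in_span_sum => s _; apply: in_spanZ.
  have := @act_word_insert j a (perm_word c s); rewrite size_perm_word.
  by apply; rewrite -ltnS.
apply: in_span_sub short => _ [u size_u ->].
move: (IH u); rewrite size_u => /(_ erefl).
by apply: Omega_upto_mono; [exact: ltnW (leqnSn _) | rewrite /= negbK].
Qed.

Lemma act_odd_antisym p (c : 'I_p -> I) a :
  (forall u : seq I, (size u).+1 = p -> Omega_upto (size u) (act_word u)) ->
  Omega_upto p.+1 (act_odd (s1 a) (odd p) (antisym s1 c)).
Proof.
move=> IH; rewrite antisymE linearZ /=; apply: in_spanZ.
set x := act_odd _ _ _; set y := antisym_act (cons_idx a c).
have -> : x = p.+1%:R^-1 *: (y - (y - p.+1%:R *: x)).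
  by rewrite opprB addrC subrK scalerA mulVf ?natrC_neq0 // scale1r.
apply/in_spanZ/in_spanB; last exact: antisym_act_cons_idx_Omega.
by rewrite /y antisym_actE; apply/in_spanZ/in_span_gen; exists p.+1, (cons_idx a c).
Qed.

Lemma act_word_Omega_upto w : Omega_upto (size w) (act_word w).
Proof.
have [k] := ubnP (size w); elim: k w => // k IH [|x w] /= lt_w_k.
  by apply: in_span_gen; exists 0%N, (ffun0 (card_ord 0)); rewrite antisym_nil.
apply: in_span_linear (IH w lt_w_k) => _ [q [c [le_q odd_q ->]]].
rewrite -odd_q; apply: (@Omega_upto_mono q.+1) => //; first by rewrite /= odd_q.
apply: act_odd_antisym => u size_u; apply: IH.
by rewrite -size_u in le_q; exact: ltn_trans le_q lt_w_k.
Qed.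

Lemma antisym_span_words p (c : 'I_p -> I) : span_words p (antisym s1 c).
Proof.
rewrite antisymE; apply/in_spanZ/in_span_sum => s _.
by apply/in_spanZ/in_span_gen; exists (perm_word c s); rewrite ?size_perm_word.
Qed.

Lemma antisym_eq0 p (c : 'I_p -> I) : ~~ injectiveb c -> antisym s1 c = 0.
Proof.
case/injectivePn => i [j neq_ij eq_cij]; set x := antisym s1 c.
have x_opp : x = - x.
  rewrite {1}/x /antisym (reindex_inj (mulIg (tperm i j))) -sumrN.
  apply: eq_bigr => s _; rewrite odd_permM odd_tperm neq_ij signr_addb mulrN1 mulNr.
  congr (- (_ * _)); apply: eq_bigr => k _; rewrite permM.
  by case: tpermP => // ->; rewrite eq_cij.
have x2 : 2%:R *: x = 0 by rewrite scaler_nat mulr2n {1}x_opp addNr.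
by rewrite -[x]scale1r -(mulVf (natrC_neq0 1)) -scalerA x2 scaler0.
Qed.

Lemma in_Omega0 : in_Omega s1 0.
Proof.
by exists 0%N, (ffun0 (card_ord 0)), (ffun0 (card_ord 0)); rewrite big_ord0.
Qed.

Lemma in_OmegaZD a x y :
  in_Omega s1 x -> in_Omega s1 y -> in_Omega s1 (a *: x + y).
Proof.
move=> [m1 [c1 [w1 ->]]] [m2 [c2 [w2 ->]]].
exists (m1 + m2)%N,
  (fun i => match split i with inl j => a * c1 j | inr j => c2 j end),
  (fun i => match split i with inl j => w1 j | inr j => w2 j end).
rewrite big_split_ord scaler_sumr; congr (_ + _); apply: eq_bigr => i _.
  by rewrite (unsplitK (inl _ _)) scalerA.
by rewrite (unsplitK (inr _ _)).
Qed.

Lemma in_Omega_span (P : A -> Prop) x :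
  (forall y, P y -> in_Omega s1 y) -> in_span P x -> in_Omega s1 x.
Proof.
move=> PO; elim=> [|y /PO|a y z _ Oy _ Oz] //; first exact: in_Omega0.
exact: in_OmegaZD.
Qed.

Lemma in_Omega_antisym p (c : 'I_p -> I) : in_Omega s1 (antisym s1 c).
Proof.
have [le_p | lt_p] := leqP p n.*2; last first.
  rewrite antisym_eq0; first exact: in_Omega0.
  by apply: contraTN lt_p => /injectiveP/leq_card; rewrite !card_ord -leqNgt.
pose p' : 'I_n.*2.+1 := Ordinal (le_p : p < n.*2.+1)%N.
exists 1%N, (fun=> 1),
  (fun=> Tagged (fun q : 'I_n.*2.+1 => 'I_q -> I) (c : 'I_p' -> I)).
by rewrite big_ord1 scale1r.
Qed.

Lemma Omega_upto_in_Omega k y : Omega_upto k y -> in_Omega s1 y.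
Proof. by apply: in_Omega_span => _ [q [c [_ _ ->]]]; apply: in_Omega_antisym. Qed.

Lemma span_words_in_Omega k y : span_words k y -> in_Omega s1 y.
Proof.
move=> words_y; apply: (@Omega_upto_in_Omega k).
by apply: in_span_sub words_y => _ [u <- ->]; apply: act_word_Omega_upto.
Qed.

Lemma in_Omega_act_even d e x :
  in_Omega s1 x -> in_Omega s1 (act_even (s2 d e) x).
Proof.
move=> [m [c [w ->]]]; rewrite linear_sum.
apply: (@in_Omega_span (fun y => exists k, span_words k y)).
  by move=> y [k]; apply: span_words_in_Omega.
apply: in_span_sum => i _; rewrite linearZ; apply/in_spanZ/in_span_gen.
by exists (tag (w i)); apply/span_words_act_even/antisym_span_words.
Qed.

End OmegaStable.

Theorem proposition3 (n : nat) (hn : (1 <= n)%N) (A : algType C)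
    (s1 : 'I_(n.*2) -> A) (s2 : 'I_(n.*2) -> 'I_(n.*2) -> A) :
  is_U_osp s1 s2 ->
  (forall (a : 'I_(n.*2)) (p : 'I_(n.*2).+1) (idx : 'I_p -> 'I_(n.*2)),
      in_Omega s1 (act_odd (s1 a) (odd p) (antisym s1 idx))) /\
  (forall (a b : 'I_(n.*2)) (x : A),
      in_Omega s1 x -> in_Omega s1 (act_even (s2 a b) x)).
Proof.
move=> [[_ anticomm comm _] _]; split => [a p c | a b x].
  exact/(span_words_in_Omega anticomm comm)/span_words_act_odd/antisym_span_words.
exact: in_Omega_act_even.
Qed.
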